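(* Let $X$ be a homogeneous subspace of the Cantor set $2^\omega$ such that $X\in\Delta$. Then $X\in\mathsf{D}_\ell(\mathbf{\Sigma}^0_2)$ for some finite $\ell\in\omega$.
   Context: Spaces are separable metrizable. For an ordinal $\eta<\omega_1$ and an increasing sequence of sets $\langle A_\zeta:\zeta<\eta\rangle$, let $\mathsf{D}(\langle A_\zeta:\zeta<\eta\rangle)$ be the union of the sets $A_\zeta\setminus\bigcup_{\beta<\zeta}A_\beta$ over those $\zeta<\eta$ whose parity is opposite to that of $\eta$ (i.e. $\zeta$ odd if $\eta$ is even, $\zeta$ even if $\eta$ is odd; limit ordinals count as even). For a space $Z$, $\mathsf{D}^Z_\eta(\mathbf{\Sigma}^0_2)$ is the family of sets $\mathsf{D}(\langle A_\zeta:\zeta<\eta\rangle)$ with each $A_\zeta$ an $F_\sigma$ subset of $Z$ and the sequence increasing. A space $X$ is (absolutely) $\mathsf{D}_\eta(\mathbf{\Sigma}^0_2)$ if for every space $Z$ and every subspace $Y\subseteq Z$ homeomorphic to $X$ one has $Y\in\mathsf{D}^Z_\eta(\mathbf{\Sigma}^0_2)$; it is (absolutely) $\check{\mathsf{D}}_\eta(\mathbf{\Sigma}^0_2)$ if for every such $Y\subseteq Z$ one has $Z\setminus Y\in\mathsf{D}^Z_\eta(\mathbf{\Sigma}^0_2)$. Finally $\Delta=\mathsf{D}_\omega(\mathbf{\Sigma}^0_2)\cap\check{\mathsf{D}}_\omega(\mathbf{\Sigma}^0_2)$. A space $X$ is homogeneous if for all $x,y\in X$ there is a homeomorphism $h:X\to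 X$ with $h(x)=y$. *)

From Stdlib Require Import Reals Lra ClassicalEpsilon Arith.
Open Scope R_scope.

Record space := Space { pt :> Type; dist : pt -> pt -> R }.
Arguments dist {s} _ _.

Definition is_metric (X : space) : Prop :=
  (forall x y : X, 0 <= dist x y) /\
  (forall x y : X, dist x y = 0 <-> x = y) /\
  (forall x y : X, dist x y = dist y x) /\
  (forall x y z : X, dist x z <= dist x y + dist y z).

(** separable: a countable dense subset (possibly empty, via option). *)
Definition separable (X : space) : Prop :=
  exists s : nat -> option X, forall (x : X) (eps : R), 0 < eps ->
    exists n y, s n = Some y /\ dist x y < eps.

(** separable metric space (models a separable metrizable space) *)
Definition sep_metric (X : space) : Prop := is_metric X /\ separable X.

Definition is_open {X : space} (U : X -> Prop) : Prop :=
  forall x, U x -> exists eps, 0 < eps /\ forall y, dist x y < eps -> U y.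

Definition is_closed {X : space} (F : X -> Prop) : Prop :=
  is_open (fun x => ~ F x).

Definition Fsigma {X : space} (A : X -> Prop) : Prop :=
  exists F : nat -> X -> Prop, (forall n, is_closed (F n)) /\
    forall x, A x <-> exists n, F n x.

Definition continuous {X Y : space} (f : X -> Y) : Prop :=
  forall x eps, 0 < eps -> exists delta, 0 < delta /\
    forall y, dist x y < delta -> dist (f x) (f y) < eps.

Definition embedding {X Z : space} (e : X -> Z) : Prop :=
  continuous e /\ (forall x y, e x = e y -> x = y) /\
  (forall x eps, 0 < eps -> exists delta, 0 < delta /\
     forall y, dist (e x) (e y) < delta -> dist x y < eps).

Definition homeomorphism {X : space} (h : X -> X) : Prop :=
  exists g : X -> X, (forall x, g (h x) = x) /\ (forall y, h (g y) = y) /\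
    continuous h /\ continuous g.

Definition homogeneous (X : space) : Prop :=
  forall x y : X, exists h : X -> X, homeomorphism h /\ h x = y.

(** Difference hierarchy, for eta = ell finite and eta = omega.
    Limit ordinals count as even; omega is even so odd zeta are used. *)
Definition Dfin {Z : Type} (ell : nat) (A : nat -> Z -> Prop) (z : Z) : Prop :=
  exists zeta, (zeta < ell)%nat /\ Nat.odd zeta <> Nat.odd ell /\
    A zeta z /\ forall beta, (beta < zeta)%nat -> ~ A beta z.

Definition Domega {Z : Type} (A : nat -> Z -> Prop) (z : Z) : Prop :=
  exists zeta, Nat.odd zeta = true /\
    A zeta z /\ forall beta, (beta < zeta)%nat -> ~ A beta z.

(** D^Z_ell(Sigma^0_2): only indices < ell are relevant *)
Definition D_fin_class (Z : space) (ell : nat) (Y : Z -> Prop) : Prop :=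
  exists A : nat -> Z -> Prop,
    (forall n, (n < ell)%nat -> Fsigma (A n)) /\
    (forall i j z, (i <= j)%nat -> (j < ell)%nat -> A i z -> A j z) /\
    (forall z, Y z <-> Dfin ell A z).

Definition D_omega_class (Z : space) (Y : Z -> Prop) : Prop :=
  exists A : nat -> Z -> Prop,
    (forall n, Fsigma (A n)) /\
    (forall i j z, (i <= j)%nat -> A i z -> A j z) /\
    (forall z, Y z <-> Domega A z).

Definition abs_D_fin (X : space) (ell : nat) : Prop :=
  forall Z : space, sep_metric Z -> forall e : X -> Z, embedding e ->
    D_fin_class Z ell (fun z => exists x, e x = z).

Definition abs_D_omega (X : space) : Prop :=
  forall Z : space, sep_metric Z -> forall e : X -> Z, embedding e ->
    D_omega_class Z (fun z => exists x, e x = z).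

Definition abs_Dcheck_omega (X : space) : Prop :=
  forall Z : space, sep_metric Z -> forall e : X -> Z, embedding e ->
    D_omega_class Z (fun z => ~ exists x, e x = z).

Definition in_Delta (X : space) : Prop := abs_D_omega X /\ abs_Dcheck_omega X.

Definition cantor_dist (x y : nat -> bool) : R :=
  epsilon (inhabits 0%R) (fun r =>
    (x = y /\ r = 0) \/
    exists n, x n <> y n /\ (forall m, (m < n)%nat -> x m = y m) /\ r = (/ 2) ^ n).

Definition cantor_subspace (X : (nat -> bool) -> Prop) : space :=
  @Space {x : nat -> bool | X x}
         (fun a b => cantor_dist (proj1_sig a) (proj1_sig b)).

(* Since X is in Delta, inside the Cantor space both X and its complement are
   D_omega(Sigma^0_2), given by increasing sequences (A_n) and (B_n) of F_sigma sets.
   The closed pieces of all A_n and B_n cover the closure of X, so by the Baire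
   category theorem there is a cylinder [u|q] meeting X on which a single A_n or B_n
   holds throughout the closure of X; there X agrees with a D_m(Sigma^0_2) set for an
   even m.  By homogeneity every point of X has a basic clopen neighbourhood that a
   homeomorphism h of X moves into [u|q].  Given a copy e[X] in a space Z, h e^-1
   extends to a continuous f on a G_delta set containing e[X]; pulling the description
   back along f shows that on an open neighbourhood O of the image of that clopen set,
   e[X] is O minus an F_sigma set, intersected with a D_m set (a point z of the
   pull-back lies in e[X] because e (h^-1 (f z)) = z by continuity).  Gluing countably many such pieces along the
   first open set containing each point makes e[X] a D_(m+2)(Sigma^0_2) set. *)

From Stdlib Require Import Reals Lra Lia Arith Cantor ClassicalEpsilon ProofIrrelevance
  FunctionalExtensionality.
Open Scope R_scope.

Lemma half_pow_pos n : 0 < (/2)^n.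
Proof. apply pow_lt; lra. Qed.

Lemma half_pow_small eps : 0 < eps -> exists n, (/2)^n < eps.
Proof.
  intros H. destruct (pow_lt_1_zero (/2)) with (y := eps) as [N HN]; auto.
  - rewrite Rabs_pos_eq; lra.
  - exists N. specialize (HN N (le_n _)). rewrite Rabs_pos_eq in HN; auto.
    left; apply half_pow_pos.
Qed.

Lemma half_pow_le a b : (a <= b)%nat -> (/2)^b <= (/2)^a.
Proof.
  intros H. replace b with (a + (b - a))%nat by lia. rewrite pow_add.
  pose proof (half_pow_pos a).
  assert ((/2)^(b - a) <= 1).
  { induction (b - a)%nat; simpl; [lra|]. pose proof (half_pow_pos n). nra. }
  nra.
Qed.

Lemma least_nat (P : nat -> Prop) :
  (exists n, P n) -> exists n, P n /\ forall m, (m < n)%nat -> ~ P m.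
Proof.
  intros [n Hn]. induction n as [n IH] using lt_wf_ind.
  destruct (classic (exists m, (m < n)%nat /\ P m)) as [[m [Hm Pm]]|H].
  - exact (IH m Hm Pm).
  - exists n; split; auto. intros m Hm Pm; apply H; eauto.
Qed.

Section Metric.
Variable Z : space.
Hypothesis HZ : is_metric Z.

Lemma dist_refl (z : Z) : dist z z = 0.
Proof. destruct HZ as [_ [H _]]. apply H; auto. Qed.

Lemma dist_sym (z w : Z) : dist z w = dist w z.
Proof. destruct HZ as [_ [_ [H _]]]. apply H. Qed.

Lemma dist_triangle (x y z : Z) : dist x z <= dist x y + dist y z.
Proof. destruct HZ as [_ [_ [_ H]]]. apply H. Qed.

Lemma dist_nonneg (x y : Z) : 0 <= dist x y.
Proof. destruct HZ as [H _]. apply H. Qed.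

Definition closure (S : Z -> Prop) (z : Z) : Prop :=
  forall eps, 0 < eps -> exists s, S s /\ dist z s < eps.

Lemma closure_incl (S : Z -> Prop) z : S z -> closure S z.
Proof. intros H eps He. exists z; split; auto. rewrite dist_refl; auto. Qed.

Lemma closed_closure S : is_closed (closure S).
Proof.
  intros x Hx. apply not_all_ex_not in Hx as [eps Hx].
  apply imply_to_and in Hx as [He Hx].
  exists (eps / 2); split; [lra|]. intros y Hy Hcl.
  destruct (Hcl (eps / 2)) as [s [Ss Hs]]; [lra|].
  apply Hx. exists s; split; auto. pose proof (dist_triangle x y s). lra.
Qed.

Lemma Fsigma_open (O : Z -> Prop) : is_open O -> Fsigma O.
Proof.
  intros HO. exists (fun n z => forall y, dist z y < (/2)^n -> O y). split.
  - intros n x Hx. apply not_all_ex_not in Hx as [y Hy].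
    apply imply_to_and in Hy as [Hxy Hy].
    exists ((/2)^n - dist x y); split; [lra|]. intros w Hw Hc. apply Hy, Hc.
    pose proof (dist_triangle w x y). rewrite (dist_sym w x) in H. lra.
  - intros z; split.
    + intros Oz. destruct (HO z Oz) as [e [He H]]. destruct (half_pow_small e He) as [n Hn].
      exists n. intros y Hy. apply H. lra.
    + intros [n Hn]. apply Hn. rewrite dist_refl. apply half_pow_pos.
Qed.

End Metric.

Lemma closed_compl {Z : space} (O : Z -> Prop) : is_open O -> is_closed (fun z => ~ O z).
Proof.
  intros H x Hx. apply NNPP in Hx. destruct (H x Hx) as [e [He H2]].
  exists e; split; auto.
Qed.

Lemma closed0 {Z : space} : is_closed (fun _ : Z => False).
Proof. intros x _. exists 1; split; [lra|]. auto. Qed.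

Lemma closedI {Z : space} (C D : Z -> Prop) :
  is_closed C -> is_closed D -> is_closed (fun z => C z /\ D z).
Proof.
  intros HC HD x Hx. apply not_and_or in Hx as [Hx|Hx].
  - destruct (HC x Hx) as [e [He H]]. exists e; split; auto. intros y Hy [Cy _]. exact (H y Hy Cy).
  - destruct (HD x Hx) as [e [He H]]. exists e; split; auto. intros y Hy [_ Dy]. exact (H y Hy Dy).
Qed.

Lemma Fsigma_closed {Z : space} (C : Z -> Prop) : is_closed C -> Fsigma C.
Proof.
  intros H. exists (fun _ => C). split; auto.
  intros z; split; [intros h; exists O; auto | intros [_ h]; auto].
Qed.

Lemma Fsigma0 {Z : space} : Fsigma (fun _ : Z => False).
Proof. apply Fsigma_closed, closed0. Qed.

Lemma Fsigma_ext {Z : space} (A B : Z -> Prop) :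
  Fsigma A -> (forall z, A z <-> B z) -> Fsigma B.
Proof. intros [F [HF EF]] E. exists F; split; auto. intros z; rewrite <- E; auto. Qed.

Lemma FsigmaI {Z : space} (A B : Z -> Prop) :
  Fsigma A -> Fsigma B -> Fsigma (fun z => A z /\ B z).
Proof.
  intros [F [HF EF]] [G [HG EG]].
  exists (fun k z => F (fst (of_nat k)) z /\ G (snd (of_nat k)) z). split.
  - intros k; apply closedI; auto.
  - intros z; split.
    + intros [Az Bz]. apply EF in Az as [a Ha]. apply EG in Bz as [b Hb].
      exists (to_nat (a, b)). rewrite cancel_of_to; simpl; auto.
    + intros [k [H1 H2]]. split; [apply EF|apply EG]; eauto.
Qed.

Lemma Fsigma_bigcup {Z : space} (A : nat -> Z -> Prop) :
  (forall i, Fsigma (A i)) -> Fsigma (fun z => exists i, A i z).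
Proof.
  intros H.
  destruct (choice (fun i (F : nat -> Z -> Prop) =>
    (forall n, is_closed (F n)) /\ forall z, A i z <-> exists n, F n z) H) as [F HF].
  exists (fun k => F (fst (of_nat k)) (snd (of_nat k))). split.
  - intros k. apply HF.
  - intros z; split.
    + intros [i Hi]. apply HF in Hi as [n Hn]. exists (to_nat (i, n)). rewrite cancel_of_to; auto.
    + intros [k Hk]. exists (fst (of_nat k)). apply HF. eauto.
Qed.

Lemma FsigmaU {Z : space} (A B : Z -> Prop) :
  Fsigma A -> Fsigma B -> Fsigma (fun z => A z \/ B z).
Proof.
  intros HA HB. apply (Fsigma_ext (fun z => exists i, match i with O => A z | _ => B z end)).
  - apply Fsigma_bigcup. intros [|i]; auto.
  - intros z; split; [intros [[|i] h]; auto | intros [h|h]; [exists O | exists 1%nat]; auto].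
Qed.

Definition increasing {Z : Type} (A : nat -> Z -> Prop) : Prop :=
  forall i j z, (i <= j)%nat -> A i z -> A j z.

Definition first_index {Z : Type} (A : nat -> Z -> Prop) (z : Z) (k : nat) : Prop :=
  A k z /\ forall b, (b < k)%nat -> ~ A b z.

Lemma first_index_exists {Z : Type} (A : nat -> Z -> Prop) z k :
  A k z -> exists k0, first_index A z k0.
Proof. intros H. apply (least_nat (fun k => A k z)). eauto. Qed.

Lemma first_index_unique {Z : Type} (A : nat -> Z -> Prop) z k k' :
  first_index A z k -> first_index A z k' -> k = k'.
Proof.
  intros [H1 H2] [H1' H2']. destruct (lt_eq_lt_dec k k') as [[h|h]|h]; auto.
  - exfalso; eapply H2'; eauto.
  - exfalso; eapply H2; eauto.
Qed.

Lemma first_index_le {Z : Type} (A : nat -> Z -> Prop) z k k0 :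
  A k z -> first_index A z k0 -> (k0 <= k)%nat.
Proof. intros H [_ H0]. destruct (le_lt_dec k0 k); auto. exfalso; eapply H0; eauto. Qed.

Lemma Dfin_first_index {Z : Type} ell (A : nat -> Z -> Prop) z k0 :
  first_index A z k0 -> (Dfin ell A z <-> (k0 < ell)%nat /\ Nat.odd k0 <> Nat.odd ell).
Proof.
  intros Hk0. split.
  - intros [k [H1 [H2 H3]]]. rewrite <- (first_index_unique A z k k0 H3 Hk0). auto.
  - intros [H1 H2]. exists k0. exact (conj H1 (conj H2 Hk0)).
Qed.

Lemma Domega_first_index {Z : Type} (A : nat -> Z -> Prop) z k0 :
  first_index A z k0 -> (Domega A z <-> Nat.odd k0 = true).
Proof.
  intros Hk0. split.
  - intros [k [H1 H2]]. rewrite <- (first_index_unique A z k k0 H2 Hk0). auto.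
  - intros H. exists k0. exact (conj H Hk0).
Qed.

Lemma Dfin_iff {Z W : Type} ell (A : nat -> Z -> Prop) (B : nat -> W -> Prop) z w :
  (forall k, A k z <-> B k w) -> (Dfin ell A z <-> Dfin ell B w).
Proof.
  intros E. split; intros [k [H1 [H2 [H3 H4]]]]; exists k; repeat split; auto;
    first [apply E; auto | intros b Hb Hc; apply (H4 b Hb); apply E; auto].
Qed.

(* Once [A n z] holds the first index is at most [n], so an even length [> n] suffices. *)
Lemma Dfin_Domega {Z : Type} (A : nat -> Z -> Prop) n z :
  A n z -> (Dfin (2 * S n) A z <-> Domega A z).
Proof.
  intros Hn. destruct (first_index_exists A z n Hn) as [k0 Hk0].
  pose proof (first_index_le A z n k0 Hn Hk0).
  rewrite (Dfin_first_index _ A z k0 Hk0), (Domega_first_index A z k0 Hk0), Nat.odd_even.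
  destruct (Nat.odd k0); split; intros H'; try split; try lia; try congruence; tauto.
Qed.

Definition shift {Z : Type} (A : nat -> Z -> Prop) (k : nat) : Z -> Prop :=
  match k with O => fun _ => False | S k' => A k' end.

Lemma increasing_shift {Z : Type} (A : nat -> Z -> Prop) : increasing A -> increasing (shift A).
Proof. intros HA [|i] [|j] z Hij; simpl; try tauto; try lia. apply HA; lia. Qed.

Lemma first_index_shift {Z : Type} (A : nat -> Z -> Prop) z k :
  first_index A z k -> first_index (shift A) z (S k).
Proof. intros [H1 H2]. split; auto. intros [|b] Hb; simpl; auto. apply H2; lia. Qed.

Lemma Dfin_shift_Domega {Z : Type} (A : nat -> Z -> Prop) n z :
  A n z -> (Dfin (2 * S (S n)) (shift A) z <-> ~ Domega A z).
Proof.
  intros Hn. destruct (first_index_exists A z n Hn) as [k0 Hk0].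
  pose proof (first_index_le A z n k0 Hn Hk0).
  rewrite (Dfin_first_index _ _ z _ (first_index_shift A z k0 Hk0)),
    (Domega_first_index A z k0 Hk0), Nat.odd_even, Nat.odd_succ, <- Nat.negb_odd.
  destruct (Nat.odd k0); simpl; split; intros H'; try split; try lia; try congruence; tauto.
Qed.

(* Indices 0 and 1 carry [H]; from index 2 on, [A] is shifted by two and [H] kept,
   so the new sequence is still increasing and adds exactly the condition [~ H z]. *)
Definition guard {Z : Type} (H : Z -> Prop) (A : nat -> Z -> Prop) (k : nat) (z : Z) : Prop :=
  match k with O | S O => H z | S (S j) => A j z \/ H z end.

Lemma Dfin_guard {Z : Type} m (H : Z -> Prop) (A : nat -> Z -> Prop) z :
  Nat.odd m = false -> (Dfin (m + 2) (guard H A) z <-> ~ H z /\ Dfin m A z).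
Proof.
  intros Hm. replace (m + 2)%nat with (S (S m)) by lia. split.
  - intros [k [K1 [K2 [K3 K4]]]]. rewrite Nat.odd_succ_succ, Hm in K2.
    assert (Hk : Nat.odd k = true) by (destruct (Nat.odd k); congruence).
    destruct k as [|[|j]]; [discriminate| |].
    + exfalso. apply (K4 O); [lia|]. exact K3.
    + assert (~ H z) by (intros Hz; apply (K4 O); [lia|]; exact Hz).
      split; auto. exists j. rewrite Nat.odd_succ_succ in Hk.
      repeat split; [lia|rewrite Hk, Hm; discriminate| |].
      * destruct K3; tauto.
      * intros b Hb Ab. apply (K4 (S (S b))); [lia|]. simpl; auto.
  - intros [Hz [j [J1 [J2 [J3 J4]]]]]. exists (S (S j)). rewrite !Nat.odd_succ_succ.
    repeat split; [lia|auto|simpl; auto|].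
    intros b Hb. destruct b as [|[|b]]; simpl; auto.
    intros [?|?]; [|tauto]. eapply J4; eauto. lia.
Qed.

Definition agree (k : nat) (x y : nat -> bool) : Prop := forall m, (m < k)%nat -> x m = y m.

Lemma agree_refl k x : agree k x x.
Proof. intros m _; auto. Qed.

Lemma agree_sym k x y : agree k x y -> agree k y x.
Proof. intros H m Hm; symmetry; auto. Qed.

Lemma agree_trans k x y z : agree k x y -> agree k y z -> agree k x z.
Proof. intros H1 H2 m Hm; rewrite H1; auto. Qed.

Lemma agree_le k k' x y : (k' <= k)%nat -> agree k x y -> agree k' x y.
Proof. intros H1 H2 m Hm; apply H2; lia. Qed.

Lemma first_diff (x y : nat -> bool) :
  x <> y -> exists n, x n <> y n /\ forall m, (m < n)%nat -> x m = y m.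
Proof.
  intros H. assert (Hex : exists n, x n <> y n).
  { apply NNPP; intros H1; apply H, functional_extensionality; intros n.
    apply NNPP; intros H2; apply H1; eauto. }
  destruct (least_nat _ Hex) as [n [Hn Hm]]. exists n; split; auto.
  intros m Hlt. apply NNPP; intros; eapply Hm; eauto.
Qed.

Lemma cantor_dist_spec x y : (x = y /\ cantor_dist x y = 0) \/
  exists n, x n <> y n /\ (forall m, (m < n)%nat -> x m = y m) /\ cantor_dist x y = (/ 2) ^ n.
Proof.
  unfold cantor_dist. apply epsilon_spec.
  destruct (classic (x = y)) as [E|E]; [exists 0; left; auto|].
  destruct (first_diff x y E) as [n [H1 H2]]. exists ((/2)^n); right; eauto.
Qed.

Lemma cantor_dist_eq x y n :
  x n <> y n -> (forall m, (m < n)%nat -> x m = y m) -> cantor_dist x y = (/2)^n.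
Proof.
  intros H1 H2. destruct (cantor_dist_spec x y) as [[E _]|[n' [H1' [H2' E]]]].
  - subst; congruence.
  - rewrite E. destruct (lt_eq_lt_dec n n') as [[h|h]|h]; subst; auto.
    + exfalso; apply H1; auto.
    + exfalso; apply H1'; auto.
Qed.

Lemma cantor_dist_ge x y n : x n <> y n -> (/2)^n <= cantor_dist x y.
Proof.
  intros H. destruct (cantor_dist_spec x y) as [[E _]|[n' [H1' [H2' E]]]].
  - subst; congruence.
  - rewrite E. apply half_pow_le. destruct (le_lt_dec n' n); auto.
    exfalso; apply H; auto.
Qed.

Lemma cantor_dist_nonneg x y : 0 <= cantor_dist x y.
Proof.
  destruct (cantor_dist_spec x y) as [[_ E]|[n [_ [_ E]]]]; rewrite E; [lra|].
  left; apply half_pow_pos.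
Qed.

Lemma cantor_dist_lt_agree x y k : cantor_dist x y < (/2)^k -> agree (S k) x y.
Proof.
  intros H m Hm. apply NNPP; intros Hn. pose proof (cantor_dist_ge x y m Hn).
  pose proof (half_pow_le m k ltac:(lia)). lra.
Qed.

Lemma agree_cantor_dist_lt x y k : agree (S k) x y -> cantor_dist x y < (/2)^k.
Proof.
  intros H. destruct (cantor_dist_spec x y) as [[_ E]|[n [H1 [H2 E]]]]; rewrite E.
  - apply half_pow_pos.
  - assert (Hkn : (k < n)%nat) by (destruct (le_lt_dec n k); auto; exfalso; apply H1, H; lia).
    pose proof (half_pow_le (S k) n Hkn). simpl in *. pose proof (half_pow_pos k). lra.
Qed.

Lemma agree_cantor_dist_small x eps :
  0 < eps -> exists k, forall y, agree k x y -> cantor_dist x y < eps.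
Proof.
  intros He. destruct (half_pow_small eps He) as [n Hn]. exists (S n). intros y Hy.
  pose proof (agree_cantor_dist_lt x y n Hy). lra.
Qed.

Lemma cantor_dist_sym x y : cantor_dist x y = cantor_dist y x.
Proof.
  destruct (cantor_dist_spec x y) as [[E _]|[n [H1 [H2 E]]]].
  - subst; auto.
  - rewrite E. symmetry. apply cantor_dist_eq; auto. intros m Hm; symmetry; auto.
Qed.

(* The metric is an ultrametric: at the first difference of [x] and [z],
   [y] differs from one of them. *)
Lemma cantor_dist_triangle x y z : cantor_dist x z <= cantor_dist x y + cantor_dist y z.
Proof.
  pose proof (cantor_dist_nonneg x y). pose proof (cantor_dist_nonneg y z).
  destruct (cantor_dist_spec x z) as [[_ E]|[n [H1 [H2 E]]]]; rewrite E; [lra|].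
  destruct (Bool.bool_dec (x n) (y n)) as [e|e].
  - assert (y n <> z n) by congruence. pose proof (cantor_dist_ge _ _ _ H3). lra.
  - pose proof (cantor_dist_ge _ _ _ e). lra.
Qed.

Lemma cantor_metric X : is_metric (cantor_subspace X).
Proof.
  split; [|split; [|split]]; simpl.
  - intros; apply cantor_dist_nonneg.
  - intros [x hx] [y hy]; simpl; split.
    + intros H. destruct (cantor_dist_spec x y) as [[E _]|[n [_ [_ E]]]].
      * subst. f_equal. apply proof_irrelevance.
      * pose proof (half_pow_pos n). lra.
    + intros H; inversion H; subst. destruct (cantor_dist_spec y y) as [[_ E]|[n [Hn _]]]; auto.
      congruence.
  - intros; apply cantor_dist_sym.
  - intros; apply cantor_dist_triangle.
Qed.

Fixpoint code (x : nat -> bool) (k : nat) : nat :=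
  match k with O => O | S k' => 2 * code (fun m => x (S m)) k' + Nat.b2n (x O) end.

Definition bits (n : nat) : nat -> bool := Nat.testbit n.

Lemma agree_bits_code x k : agree k x (bits (code x k)).
Proof.
  revert x. induction k; intros x m Hm; [lia|]. unfold bits.
  change (code x (S k)) with (2 * code (fun m => x (S m)) k + Nat.b2n (x O))%nat.
  destruct m.
  - symmetry. apply Nat.testbit_0_r.
  - rewrite Nat.testbit_succ_r. apply (IHk (fun m => x (S m))). lia.
Qed.

Definition cantor_space := cantor_subspace (fun _ => True).

Lemma cantor_space_sep_metric : sep_metric cantor_space.
Proof.
  split; [apply cantor_metric|].
  exists (fun n => Some (exist (fun _ => True) (bits n) I)).
  intros [x hx] eps He. destruct (agree_cantor_dist_small x eps He) as [k Hk].
  exists (code x k), (exist _ (bits (code x k)) I); split; auto.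
  simpl. apply Hk, agree_bits_code.
Qed.

Definition cclosed (F : (nat -> bool) -> Prop) : Prop :=
  forall w, ~ F w -> exists k, forall v, agree k w v -> ~ F v.

Definition cFsigma (A : (nat -> bool) -> Prop) : Prop :=
  exists F : nat -> (nat -> bool) -> Prop,
    (forall r, cclosed (F r)) /\ forall w, A w <-> exists r, F r w.

Lemma cclosed0 : cclosed (fun _ => False).
Proof. intros w _. exists O. auto. Qed.

Lemma cclosedI A B : cclosed A -> cclosed B -> cclosed (fun w => A w /\ B w).
Proof.
  intros HA HB w Hw. apply not_and_or in Hw as [H|H].
  - destruct (HA w H) as [k Hk]. exists k; intros v Hv [Av _]. eapply Hk; eauto.
  - destruct (HB w H) as [k Hk]. exists k; intros v Hv [_ Bv]. eapply Hk; eauto.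
Qed.

Lemma cclosed_cylinder q u : cclosed (agree q u).
Proof.
  intros w Hw. exists q. intros v Hv Hc. apply Hw.
  eapply agree_trans; [exact Hc | apply agree_sym; exact Hv].
Qed.

Definition adherent (X : (nat -> bool) -> Prop) (w : nat -> bool) : Prop :=
  forall k, exists x, X x /\ agree k w x.

Lemma adherent_incl X w : X w -> adherent X w.
Proof. intros Xw k. exists w; split; auto; apply agree_refl. Qed.

Lemma cclosed_adherent X : cclosed (adherent X).
Proof.
  intros w Hw. apply not_all_ex_not in Hw as [k Hk]. exists k. intros v Hv Kv.
  destruct (Kv k) as [x [Xx Ax]]. apply Hk. exists x; split; auto. eapply agree_trans; eauto.
Qed.

Lemma cclosed_of_closed (F : cantor_space -> Prop) :
  is_closed F -> cclosed (fun w => F (exist _ w I)).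
Proof.
  intros H w Hw. destruct (H _ Hw) as [e [He H2]].
  destruct (agree_cantor_dist_small w e He) as [k Hk]. exists k. intros v Hv.
  apply (H2 (exist _ v I)). simpl. auto.
Qed.

Lemma cFsigma_of_Fsigma (A : cantor_space -> Prop) :
  Fsigma A -> cFsigma (fun w => A (exist _ w I)).
Proof.
  intros [F [HF EF]]. exists (fun r w => F r (exist _ w I)). split.
  - intros r. apply cclosed_of_closed, HF.
  - intros w. apply EF.
Qed.

Lemma cFsigma0 : cFsigma (fun _ => False).
Proof.
  exists (fun _ _ => False). split; [intros; apply cclosed0|].
  intros w; split; [tauto | intros [_ []]].
Qed.

Section Baire.
Variable K : (nat -> bool) -> Prop.
Variable F : nat -> (nat -> bool) -> Prop.
Hypothesis HK : cclosed K.
Hypothesis HF : forall n, cclosed (F n).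
Hypothesis Hcov : forall w, K w -> exists n, F n w.

(* One step of the nested-cylinder construction: inside the cylinder [agree k u],
   a point of [K] together with a longer cylinder around it that misses [F n]. *)
Definition avoid_step n (u : nat -> bool) (k : nat) (q : (nat -> bool) * nat) : Prop :=
  agree k u (fst q) /\ K (fst q) /\ (forall v, agree (snd q) (fst q) v -> ~ F n v) /\
  (k < snd q)%nat.

Lemma baire w0 : K w0 -> exists n u k, K u /\ forall v, agree k u v -> K v -> F n v.
Proof.
  intros Kw0. apply NNPP; intros Hneg.
  assert (Hs : forall n u k, K u -> exists q, avoid_step n u k q).
  { intros n u k Ku. assert (exists v, agree k u v /\ K v /\ ~ F n v) as [v [H1 [H2 H3]]].
    { apply NNPP; intros H1; apply Hneg. exists n, u, k; split; auto.
      intros v Hv Kv. apply NNPP; intros H2; apply H1; eauto. }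
    destruct (HF n v H3) as [j Hj].
    exists (v, S (Nat.max j k)). unfold avoid_step; simpl; repeat split; auto; [|lia].
    intros v' Hv'. apply Hj. eapply agree_le; [|eauto]. lia. }
  set (step := fun n (p : (nat -> bool) * nat) => epsilon (inhabits p) (avoid_step n (fst p) (snd p))).
  set (sq := fix sq n := match n with O => (w0, O) | S n' => step n' (sq n') end).
  assert (Hsq : forall n, sq (S n) = epsilon (inhabits (sq n)) (avoid_step n (fst (sq n)) (snd (sq n))))
    by reflexivity.
  assert (Hinv : forall n, K (fst (sq n)) /\ (n <= snd (sq n))%nat).
  { induction n; [simpl; split; auto|]. destruct IHn as [IH1 IH2]. rewrite Hsq.
    destruct (epsilon_spec (inhabits (sq n)) (avoid_step n (fst (sq n)) (snd (sq n)))
      (Hs n _ (snd (sq n)) IH1)) as [_ [B [_ D]]].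
    split; auto. lia. }
  assert (Hst : forall n, avoid_step n (fst (sq n)) (snd (sq n)) (sq (S n))).
  { intros n. rewrite Hsq. apply epsilon_spec, Hs, Hinv. }
  assert (Hcoh : forall n p, (n <= p)%nat ->
    agree (snd (sq n)) (fst (sq n)) (fst (sq p)) /\ (snd (sq n) <= snd (sq p))%nat).
  { intros n p Hnp. induction Hnp; [split; [apply agree_refl|lia]|].
    destruct IHHnp as [I1 I2]. destruct (Hst m) as [A [_ [_ D]]]. split; [|lia].
    eapply agree_trans; eauto. eapply agree_le; [|eauto]. lia. }
  set (w := fun m => fst (sq (S m)) m).
  assert (Hw : forall n, agree (snd (sq n)) (fst (sq n)) w).
  { intros n m Hm. unfold w. destruct (le_lt_dec n (S m)).
    - apply (proj1 (Hcoh n (S m) l)); auto.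
    - symmetry. apply (proj1 (Hcoh (S m) n ltac:(lia))). pose proof (proj2 (Hinv (S m))). lia. }
  assert (Kw : K w).
  { apply NNPP; intros Hk. destruct (HK w Hk) as [j Hj]. apply (Hj (fst (sq j))); [|apply Hinv].
    apply agree_sym. eapply agree_le; [|apply Hw]. apply Hinv. }
  destruct (Hcov w Kw) as [n Fn]. destruct (Hst n) as [_ [_ [C _]]].
  apply (C w); auto.
Qed.

End Baire.

Lemma baire_cFsigma K (C : nat -> (nat -> bool) -> Prop) w0 :
  cclosed K -> (forall k, cFsigma (C k)) -> (forall w, K w -> exists k, C k w) -> K w0 ->
  exists k u q, K u /\ forall v, agree q u v -> K v -> C k v.
Proof.
  intros HK HC Hcov Kw0.
  destruct (choice (fun k (F : nat -> (nat -> bool) -> Prop) =>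
    (forall r, cclosed (F r)) /\ forall w, C k w <-> exists r, F r w) HC) as [F HF].
  destruct (baire K (fun j => F (fst (of_nat j)) (snd (of_nat j))) HK) with w0
    as [j [u [q [Ku Hu]]]]; auto.
  - intros j. apply HF.
  - intros w Kw. destruct (Hcov w Kw) as [k Hk]. apply HF in Hk as [r Hr].
    exists (to_nat (k, r)). rewrite cancel_of_to. exact Hr.
  - exists (fst (of_nat j)), u, q. split; auto. intros v Hv Kv. apply HF. eauto.
Qed.

Definition embed_cantor X (x : cantor_subspace X) : cantor_space := exist _ (proj1_sig x) I.

Lemma embedding_embed_cantor X : embedding (embed_cantor X).
Proof.
  split; [|split].
  - intros x eps He. exists eps; split; auto.
  - intros [x hx] [y hy] E. inversion E; subst. f_equal; apply proof_irrelevance.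
  - intros x eps He. exists eps; split; auto.
Qed.

Lemma embed_cantor_image X w : (exists x, embed_cantor X x = exist _ w I) <-> X w.
Proof.
  split.
  - intros [[x hx] E]. inversion E; subst; auto.
  - intros Hw. exists (exist _ w Hw). reflexivity.
Qed.

Lemma Delta_cantor_repr X : in_Delta (cantor_subspace X) ->
  exists A B : nat -> (nat -> bool) -> Prop,
    (forall n, cFsigma (A n)) /\ (forall n, cFsigma (B n)) /\ increasing A /\ increasing B /\
    (forall w, X w <-> Domega A w) /\ (forall w, ~ X w <-> Domega B w).
Proof.
  intros [HDa HDb].
  destruct (HDa cantor_space cantor_space_sep_metric _ (embedding_embed_cantor X))
    as [A [HA1 [HA2 HA3]]].
  destruct (HDb cantor_space cantor_space_sep_metric _ (embedding_embed_cantor X))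
    as [B [HB1 [HB2 HB3]]].
  exists (fun n w => A n (exist _ w I)), (fun n w => B n (exist _ w I)).
  repeat split.
  - intros n. apply cFsigma_of_Fsigma, HA1.
  - intros n. apply cFsigma_of_Fsigma, HB1.
  - intros i j w Hij. apply HA2; auto.
  - intros i j w Hij. apply HB2; auto.
  - intros Xw. apply HA3, embed_cantor_image; auto.
  - intros Hw. apply embed_cantor_image, HA3; auto.
  - intros Xw. apply HB3. rewrite embed_cantor_image; auto.
  - intros Hw. rewrite <- embed_cantor_image. apply HB3; auto.
Qed.

Lemma Delta_local_Dfin X : (exists x, X x) -> in_Delta (cantor_subspace X) ->
  exists m (Astar : nat -> (nat -> bool) -> Prop) q u,
    Nat.odd m = false /\ (forall k, cFsigma (Astar k)) /\ increasing Astar /\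
    (exists p, X p /\ agree q u p) /\
    forall w, adherent X w -> agree q u w -> (X w <-> Dfin m Astar w).
Proof.
  intros [x0 Xx0] HD.
  destruct (Delta_cantor_repr X HD) as [A [B [HA [HB [IA [IB [XA XB]]]]]]].
  set (C := fun k => if Nat.even k then A (Nat.div2 k) else B (Nat.div2 k)).
  destruct (baire_cFsigma (adherent X) C x0) as [k [u [q [Ku Hu]]]].
  - apply cclosed_adherent.
  - intros k. unfold C. destruct (Nat.even k); auto.
  - intros w _. destruct (classic (X w)) as [Xw|Xw].
    + apply XA in Xw as [n [_ [An _]]]. exists (2 * n)%nat.
      unfold C. rewrite Nat.even_even, Nat.div2_double. exact An.
    + apply XB in Xw as [n [_ [Bn _]]]. exists (2 * n + 1)%nat.
      unfold C. rewrite Nat.even_odd, Nat.add_1_r, Nat.div2_succ_double. exact Bn.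
  - apply adherent_incl, Xx0.
  - assert (Hp : exists p, X p /\ agree q u p) by (destruct (Ku q) as [p [? ?]]; eauto).
    unfold C in Hu. destruct (Nat.even k).
    + exists (2 * S (Nat.div2 k))%nat, A, q, u.
      split; [apply Nat.odd_even|]. split; [exact HA|]. split; [exact IA|]. split; [exact Hp|].
      intros w Kw Hw. rewrite XA. symmetry. apply Dfin_Domega, Hu; auto.
    + exists (2 * S (S (Nat.div2 k)))%nat, (shift B), q, u.
      split; [apply Nat.odd_even|]. split; [intros [|i]; [apply cFsigma0 | apply HB]|].
      split; [apply increasing_shift, IB|]. split; [exact Hp|].
      intros w Kw Hw. rewrite (Dfin_shift_Domega B (Nat.div2 k) w (Hu w Hw Kw)), <- XB.
      split; [tauto | apply NNPP].
Qed.

(* Extension of a continuous map [g] from [Y] into the Cantor space: [ext_map] is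
   continuous on the set of points where every coordinate of [g] has oscillation
   zero and which are limits of [Y] (a countable intersection of open sets). *)
Section Extension.
Variable Z : space.
Hypothesis HZ : is_metric Z.
Variable Y : Z -> Prop.
Variable g : Z -> nat -> bool.
Hypothesis Hg : forall y, Y y -> forall k, exists d, 0 < d /\
  forall y', Y y' -> dist y y' < d -> agree k (g y) (g y').

Definition osc_radius (n : nat) (z : Z) (d : R) : Prop :=
  0 < d /\ forall y y', Y y -> Y y' -> dist z y < d -> dist z y' < d -> g y n = g y' n.

Definition ext_domain (n : nat) (z : Z) : Prop :=
  (exists d, osc_radius n z d) /\ (exists y, Y y /\ dist z y < (/2)^n).

Definition ext_map (z : Z) (n : nat) : bool :=
  let d := epsilon (inhabits 1) (osc_radius n z) in
  g (epsilon (inhabits z) (fun y => Y y /\ dist z y < d)) n.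

Lemma ext_map_spec z n :
  (exists d, osc_radius n z d) ->
  (exists y, Y y /\ dist z y < epsilon (inhabits 1) (osc_radius n z)) ->
  osc_radius n z (epsilon (inhabits 1) (osc_radius n z)) /\
  exists y, Y y /\ dist z y < epsilon (inhabits 1) (osc_radius n z) /\ ext_map z n = g y n.
Proof.
  intros H1 H2. split; [apply epsilon_spec; auto|].
  exists (epsilon (inhabits z) (fun y => Y y /\ dist z y < epsilon (inhabits 1) (osc_radius n z))).
  destruct (epsilon_spec (inhabits z) _ H2) as [A B]. split; auto.
Qed.

Lemma ext_domain_open n : is_open (ext_domain n).
Proof.
  intros z [[d [Hd Hosc]] [y [Yy Hzy]]].
  exists (Rmin (d / 2) ((/2)^n - dist z y)). split; [apply Rmin_glb_lt; lra|].
  intros w Hw. pose proof (Rmin_l (d / 2) ((/2)^n - dist z y)).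
  pose proof (Rmin_r (d / 2) ((/2)^n - dist z y)). split.
  - exists (d / 2). split; [lra|]. intros y1 y2 Y1 Y2 D1 D2. apply Hosc; auto.
    + pose proof (dist_triangle Z HZ z w y1). lra.
    + pose proof (dist_triangle Z HZ z w y2). lra.
  - exists y; split; auto. pose proof (dist_triangle Z HZ w z y).
    rewrite (dist_sym Z HZ w z) in H1. lra.
Qed.

Lemma ext_domain_of_Y y n : Y y -> ext_domain n y.
Proof.
  intros Yy. split.
  - destruct (Hg y Yy (S n)) as [d [Hd H]]. exists d; split; auto.
    intros y1 y2 Y1 Y2 D1 D2. rewrite <- (H y1 Y1 D1 n), <- (H y2 Y2 D2 n); auto.
  - exists y; split; auto. rewrite dist_refl; auto. apply half_pow_pos.
Qed.

Lemma ext_map_Y y n : Y y -> ext_map y n = g y n.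
Proof.
  intros Yy. destruct (ext_domain_of_Y y n Yy) as [H1 _].
  pose proof (epsilon_spec (inhabits 1) _ H1) as Hd.
  destruct (ext_map_spec y n H1) as [_ [y' [Y' [D' E]]]].
  { exists y; split; auto. rewrite dist_refl; auto. apply Hd. }
  rewrite E. apply Hd; auto. rewrite dist_refl; auto. apply Hd.
Qed.

Lemma ext_map_cont z : (forall n, ext_domain n z) -> forall k, exists d, 0 < d /\
  forall w, (forall n, ext_domain n w) -> dist z w < d -> agree k (ext_map z) (ext_map w).
Proof.
  intros Gz k. induction k as [|k [d1 [Hd1 H1]]].
  { exists 1; split; [lra|]. intros; intros m Hm; lia. }
  destruct (Gz k) as [Ek _]. pose proof (epsilon_spec (inhabits 1) _ Ek) as Hdk.
  set (dk := epsilon (inhabits 1) (osc_radius k z)) in *.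
  assert (Hdkp : 0 < dk) by apply Hdk.
  assert (Hz : exists y, Y y /\ dist z y < dk).
  { destruct (half_pow_small dk Hdkp) as [j Hj].
    destruct (Gz j) as [_ [y [Yy Dy]]]. exists y; split; auto. lra. }
  destruct (ext_map_spec z k Ek Hz) as [_ [yz [Yz [Dz Ez]]]].
  exists (Rmin d1 (dk / 2)). split; [apply Rmin_glb_lt; lra|].
  intros w Gw Dw. pose proof (Rmin_l d1 (dk / 2)). pose proof (Rmin_r d1 (dk / 2)).
  intros m Hm. destruct (Nat.eq_dec m k) as [->|Hne]; [|apply (H1 w Gw); [lra|lia]].
  destruct (Gw k) as [Ewk _]. pose proof (epsilon_spec (inhabits 1) _ Ewk) as Hdw.
  set (dw := epsilon (inhabits 1) (osc_radius k w)) in *.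
  assert (Hdwp : 0 < dw) by apply Hdw.
  (* a point of [Y] close enough to [w] lies in both oscillation balls *)
  destruct (half_pow_small (Rmin dw (dk / 2 - dist z w))) as [j Hj]; [apply Rmin_glb_lt; lra|].
  pose proof (Rmin_l dw (dk / 2 - dist z w)). pose proof (Rmin_r dw (dk / 2 - dist z w)).
  destruct (Gw j) as [_ [y' [Y' D']]].
  destruct (ext_map_spec w k Ewk) as [_ [yw [Yw [Dw' Ew]]]]; [exists y'; split; auto; unfold dw in *; lra|].
  rewrite Ez, Ew. transitivity (g y' k).
  - apply Hdk; auto. pose proof (dist_triangle Z HZ z w y'). lra.
  - apply Hdw; auto. lra.
Qed.

End Extension.

Definition local_piece (Z : space) (m : nat) (Y O H : Z -> Prop) (A : nat -> Z -> Prop) : Prop :=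
  is_open O /\ Fsigma H /\ (forall k, Fsigma (A k)) /\ increasing A /\
  forall z, Y z /\ O z <-> O z /\ ~ H z /\ Dfin m A z.

(* A point is handled by the first open set of the cover containing it. *)
Section Glue.
Variable Z : space.
Hypothesis HZ : is_metric Z.
Variable Y : Z -> Prop.
Variable m : nat.
Hypothesis Hm : Nat.odd m = false.
Variable O H : nat -> Z -> Prop.
Variable A : nat -> nat -> Z -> Prop.
Hypothesis Hpiece : forall i, local_piece Z m Y (O i) (H i) (A i).
Hypothesis Hcov : forall z, Y z -> exists i, O i z.

Lemma Fsigma_first_index i : Fsigma (fun z => first_index O z i).
Proof.
  apply FsigmaI; [apply Fsigma_open; auto; apply Hpiece|]. apply Fsigma_closed.
  intros x Hx. apply not_all_ex_not in Hx as [j Hx]. apply imply_to_and in Hx as [Hj Hx].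
  apply NNPP in Hx. destruct (proj1 (Hpiece j) x Hx) as [e [He He2]]. exists e; split; auto.
  intros y Hy Hc. apply (Hc j Hj). auto.
Qed.

Definition glued (k : nat) (z : Z) : Prop := exists i, first_index O z i /\ guard (H i) (A i) k z.

Lemma glued_first_index i z k : first_index O z i -> (glued k z <-> guard (H i) (A i) k z).
Proof.
  intros Hi; split.
  - intros [i' [Hi' G]]. rewrite (first_index_unique O z i i'); auto.
  - intros G; exists i; auto.
Qed.

Lemma D_fin_class_glued : D_fin_class Z (m + 2) Y.
Proof.
  exists glued. split; [|split].
  - intros k _. apply Fsigma_bigcup. intros i. apply FsigmaI; [apply Fsigma_first_index|].
    destruct (Hpiece i) as [_ [HH [HA _]]].
    destruct k as [|[|j]]; [exact HH | exact HH | exact (FsigmaU _ _ (HA j) HH)].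
  - intros a b z Hab _ [i [Pi Di]]. exists i; split; auto.
    destruct (Hpiece i) as [_ [_ [_ [HAinc _]]]].
    destruct a as [|[|a]]; destruct b as [|[|b]]; simpl in *; try lia; auto.
    destruct Di; [left; apply (HAinc a); auto; lia | auto].
  - intros z. split.
    + intros Yz. destruct (Hcov z Yz) as [i0 Oi0].
      destruct (first_index_exists O z i0 Oi0) as [i Pi].
      rewrite (Dfin_iff _ _ (guard (H i) (A i)) z z (fun k => glued_first_index i z k Pi)).
      apply Dfin_guard; auto. apply Hpiece. destruct Pi; auto.
    + intros HD. pose proof HD as [k [_ [_ [[i [Pi _]] _]]]].
      rewrite (Dfin_iff _ _ (guard (H i) (A i)) z z (fun k => glued_first_index i z k Pi)) in HD.
      apply Dfin_guard in HD; auto. destruct (Hpiece i) as [_ [_ [_ [_ Heq]]]].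
      apply (Heq z). destruct Pi; tauto.
Qed.

End Glue.

Lemma D_fin_class_glue (Z : space) (HZ : is_metric Z) (Y : Z -> Prop) m (P : nat -> Z -> Prop) :
  Nat.odd m = false -> (forall z, Y z -> exists i, P i z) ->
  (forall i, exists O H A, local_piece Z m Y O H A /\ forall z, P i z -> O z) ->
  D_fin_class Z (m + 2) Y.
Proof.
  intros Hm Hcov Hloc.
  destruct (choice (fun i (t : (Z -> Prop) * (Z -> Prop) * (nat -> Z -> Prop)) =>
    local_piece Z m Y (fst (fst t)) (snd (fst t)) (snd t) /\ forall z, P i z -> fst (fst t) z))
    as [f Hf].
  { intros i. destruct (Hloc i) as [O [H [A HOHA]]]. exists (O, H, A); exact HOHA. }
  apply (D_fin_class_glued Z HZ Y m Hm (fun i => fst (fst (f i))) (fun i => snd (fst (f i)))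
    (fun i => snd (f i))).
  - intros i; apply Hf.
  - intros z Yz. destruct (Hcov z Yz) as [i Hi]. exists i. apply Hf, Hi.
Qed.

Definition basic_clopen (i : nat) (w : nat -> bool) : Prop :=
  agree (snd (of_nat i)) (bits (fst (of_nat i))) w.

Lemma basic_clopen_agree i w v :
  basic_clopen i w -> agree (snd (of_nat i)) w v -> basic_clopen i v.
Proof. apply agree_trans. Qed.

(* Transfer of the local description of [X] along a homeomorphism [h] of [X] that maps
   the basic clopen set [i] into the good cylinder [agree q u], to an embedded copy [e[X]]. *)
Section Transfer.
Variable X : (nat -> bool) -> Prop.
Let CX := cantor_subspace X.
Variable x0 : CX.
Variable m : nat.
Variable Astar : nat -> (nat -> bool) -> Prop.
Variable Fs : nat -> nat -> (nat -> bool) -> Prop.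
Hypothesis HFs : forall k r, cclosed (Fs k r).
Hypothesis HAs : forall k w, Astar k w <-> exists r, Fs k r w.
Hypothesis HAinc : increasing Astar.
Variable q : nat.
Variable u : nat -> bool.
Hypothesis Hloc : forall w, adherent X w -> agree q u w -> (X w <-> Dfin m Astar w).
Variable Z : space.
Hypothesis HZ : is_metric Z.
Variable e : CX -> Z.
Hypothesis He : embedding e.
Variables h hinv : CX -> CX.
Hypothesis Hhinv : forall x, hinv (h x) = x.
Hypothesis Hhc : continuous h.
Hypothesis Hhic : continuous hinv.
Variable i : nat.
Hypothesis Hmove : forall x : CX, basic_clopen i (proj1_sig x) -> agree q u (proj1_sig (h x)).

Let Y := fun z : Z => exists x, e x = z.

Definition pull_radius (x : CX) : R :=
  epsilon (inhabits 1) (fun d => 0 < d /\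
    forall y, dist (e x) (e y) < d -> dist x y < (/2)^(snd (of_nat i))).

Lemma pull_radius_spec x : 0 < pull_radius x /\
  forall y, dist (e x) (e y) < pull_radius x -> dist x y < (/2)^(snd (of_nat i)).
Proof.
  unfold pull_radius. apply epsilon_spec. destruct He as [_ [_ H3]].
  apply H3, half_pow_pos.
Qed.

Definition near_clopen (z : Z) : Prop :=
  exists x : CX, basic_clopen i (proj1_sig x) /\ dist (e x) z < pull_radius x.

Lemma near_clopen_open : is_open near_clopen.
Proof.
  intros z [x [Cx Dx]]. exists (pull_radius x - dist (e x) z). split; [lra|].
  intros w Hw. exists x; split; auto. pose proof (dist_triangle Z HZ (e x) z w). lra.
Qed.

Lemma near_clopen_image x : basic_clopen i (proj1_sig x) -> near_clopen (e x).
Proof. intros H. exists x; split; auto. rewrite dist_refl; auto. apply pull_radius_spec. Qed.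

Lemma near_clopen_basic_clopen x : near_clopen (e x) -> basic_clopen i (proj1_sig x).
Proof.
  intros [x' [C' D']]. apply (proj2 (pull_radius_spec x')) in D'. simpl in D'.
  apply cantor_dist_lt_agree in D'. eapply basic_clopen_agree; eauto.
  eapply agree_le; [|eauto]. lia.
Qed.

Lemma e_inj x y : e x = e y -> x = y.
Proof. destruct He as [_ [H _]]; auto. Qed.

Definition preimage (z : Z) : CX := epsilon (inhabits x0) (fun x => e x = z).

Lemma preimage_e x : preimage (e x) = x.
Proof. apply e_inj. unfold preimage. apply (epsilon_spec (inhabits x0) (fun x' => e x' = e x)). eauto. Qed.

Definition h_image (z : Z) : nat -> bool := proj1_sig (h (preimage z)).

Lemma h_image_cont y : Y y -> forall k, exists d, 0 < d /\
  forall y', Y y' -> dist y y' < d -> agree k (h_image y) (h_image y').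
Proof.
  intros [x <-] k. destruct (Hhc x ((/2)^k) (half_pow_pos k)) as [d1 [Hd1 H1]].
  destruct He as [_ [_ H3]]. destruct (H3 x d1 Hd1) as [d2 [Hd2 H2]].
  exists d2; split; auto. intros y' [x' <-] D. unfold h_image. rewrite !preimage_e.
  apply H2, H1 in D. simpl in D. apply cantor_dist_lt_agree in D. eapply agree_le; [|eauto]. lia.
Qed.

Definition ext_dom (z : Z) : Prop := forall n, ext_domain Z Y h_image n z.
Definition ext_h : Z -> nat -> bool := ext_map Z Y h_image.

Lemma ext_dom_Y y : Y y -> ext_dom y.
Proof. intros Yy n. apply ext_domain_of_Y; auto. apply h_image_cont. Qed.

Lemma ext_h_e x : ext_h (e x) = proj1_sig (h x).
Proof.
  apply functional_extensionality; intros n. unfold ext_h.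
  rewrite (ext_map_Y Z HZ Y h_image h_image_cont (e x) n (ex_intro _ x eq_refl)).
  unfold h_image. rewrite preimage_e; auto.
Qed.

Lemma ext_h_cont z : ext_dom z -> forall k, exists d, 0 < d /\
  forall w, ext_dom w -> dist z w < d -> agree k (ext_h z) (ext_h w).
Proof. apply ext_map_cont; auto. Qed.

Lemma closure_preimage (T : (nat -> bool) -> Prop) z : cclosed T -> ext_dom z ->
  closure Z (fun w => ext_dom w /\ T (ext_h w)) z -> T (ext_h z).
Proof.
  intros HT G Hcl. apply NNPP; intros Hn. destruct (HT _ Hn) as [k Hk].
  destruct (ext_h_cont z G k) as [d [Hd Hf]]. destruct (Hcl d Hd) as [w [[Gw Tw] Dw]].
  apply (Hk (ext_h w)); auto.
Qed.

Definition good_cylinder (w : nat -> bool) : Prop := adherent X w /\ agree q u w.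

Definition outside (z : Z) : Prop :=
  ~ ext_dom z \/ ~ closure Z Y z \/
  ~ closure Z (fun w => ext_dom w /\ good_cylinder (ext_h w)) z.

Definition pulled (k : nat) (z : Z) : Prop :=
  exists j, (j <= k)%nat /\ exists r, closure Z (fun w => ext_dom w /\ Fs j r (ext_h w)) z.

Lemma Fsigma_outside : Fsigma outside.
Proof.
  apply FsigmaU; [|apply FsigmaU].
  - apply (Fsigma_ext (fun z => exists n, ~ ext_domain Z Y h_image n z)).
    + apply Fsigma_bigcup. intros n. apply Fsigma_closed, closed_compl, ext_domain_open; auto.
    + intros z. unfold ext_dom. split; [intros [n Hn] Hc; apply Hn; auto|].
      intros Hn; apply not_all_ex_not; auto.
  - apply Fsigma_open; auto. apply closed_closure; auto.
  - apply Fsigma_open; auto. apply closed_closure; auto.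
Qed.

Lemma Fsigma_pulled k : Fsigma (pulled k).
Proof.
  apply Fsigma_bigcup. intros j. destruct (le_lt_dec j k) as [l|l].
  - apply (Fsigma_ext (fun z => exists r, closure Z (fun w => ext_dom w /\ Fs j r (ext_h w)) z)).
    + apply Fsigma_bigcup. intros r. apply Fsigma_closed, closed_closure; auto.
    + intros z; tauto.
  - apply (Fsigma_ext (fun _ => False)); [apply Fsigma0|]. intros z; split; [tauto|lia].
Qed.

Lemma increasing_pulled : increasing pulled.
Proof. intros a b z H [j [H1 H2]]. exists j; split; auto. lia. Qed.

Lemma pulled_ext_h z k : ext_dom z -> (pulled k z <-> Astar k (ext_h z)).
Proof.
  intros G. split.
  - intros [j [H1 [r H2]]]. apply (HAinc j); auto. apply HAs. exists r.
    apply closure_preimage; auto.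
  - intros Ak. apply HAs in Ak as [r Hr]. exists k; split; auto. exists r.
    apply closure_incl; auto.
Qed.

(* Continuity of [e], [hinv] and [ext_h] at [z] and density of [Y] near [z]: the
   points [e x] close to [z] satisfy [ext_h (e x) = h x], so [e (hinv (h x)) = e x]
   tends both to [z] and to [e (hinv (ext_h z))]. *)
Lemma ext_h_fixpoint z (G : ext_dom z) (Xf : X (ext_h z)) :
  closure Z Y z -> e (hinv (exist _ (ext_h z) Xf)) = z.
Proof.
  intros Hc. set (xz := exist X (ext_h z) Xf : CX). set (x' := hinv xz).
  apply NNPP; intros Hne.
  assert (Hr : 0 < dist (e x') z).
  { destruct (dist_nonneg Z HZ (e x') z) as [?|E]; auto. exfalso; apply Hne.
    destruct HZ as [_ [H2 _]]. apply H2; auto. }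
  set (r := dist (e x') z) in *.
  destruct He as [Hec _]. destruct (Hec x' (r / 3) ltac:(lra)) as [d1 [Hd1 H1]].
  destruct (Hhic xz d1 Hd1) as [d2 [Hd2 H2]].
  destruct (agree_cantor_dist_small (ext_h z) d2 Hd2) as [k Hk].
  destruct (ext_h_cont z G k) as [d3 [Hd3 H3]].
  destruct (Hc (Rmin d3 (r / 3))) as [y [[x <-] Dy]]; [apply Rmin_glb_lt; lra|].
  pose proof (Rmin_l d3 (r / 3)). pose proof (Rmin_r d3 (r / 3)).
  assert (A1 := H3 (e x) (ext_dom_Y (e x) (ex_intro _ x eq_refl)) ltac:(lra)).
  rewrite ext_h_e in A1. apply Hk in A1.
  assert (A2 : dist xz (h x) < d2) by exact A1.
  apply H2 in A2. rewrite Hhinv in A2. apply H1 in A2.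
  pose proof (dist_triangle Z HZ (e x') (e x) z). rewrite (dist_sym Z HZ (e x) z) in H4.
  unfold r in *. lra.
Qed.

Lemma image_near_clopen z :
  Y z /\ near_clopen z <-> near_clopen z /\ ~ outside z /\ Dfin m pulled z.
Proof.
  split.
  - intros [[x <-] Oz]. pose proof (Hmove x (near_clopen_basic_clopen x Oz)) as Hq.
    assert (Kh : adherent X (proj1_sig (h x))) by (apply adherent_incl, proj2_sig).
    assert (G := ext_dom_Y (e x) (ex_intro _ x eq_refl)).
    split; auto. split.
    + intros [Hn|[Hn|Hn]]; apply Hn; auto.
      * apply closure_incl; auto. exists x; auto.
      * apply closure_incl; auto. split; auto. rewrite ext_h_e. split; auto.
    + rewrite (Dfin_iff m pulled Astar (e x) (ext_h (e x))) by (intros k; apply pulled_ext_h; auto).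
      rewrite ext_h_e. apply Hloc; auto. apply proj2_sig.
  - intros [Oz [Hn Dz]]. apply not_or_and in Hn as [G Hn]. apply not_or_and in Hn as [C1 C2].
    apply NNPP in G. apply NNPP in C1. apply NNPP in C2.
    assert (Cf : good_cylinder (ext_h z))
      by (apply closure_preimage; auto; apply cclosedI; [apply cclosed_adherent | apply cclosed_cylinder]).
    rewrite (Dfin_iff m pulled Astar z (ext_h z)) in Dz by (intros k; apply pulled_ext_h; auto).
    destruct Cf as [Kf Qf]. assert (Xf : X (ext_h z)) by (apply Hloc; auto).
    split; auto. exists (hinv (exist _ (ext_h z) Xf)). apply ext_h_fixpoint; auto.
Qed.

Lemma local_piece_near_clopen : local_piece Z m Y near_clopen outside pulled.
Proof.
  split; [apply near_clopen_open|]. split; [apply Fsigma_outside|].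
  split; [apply Fsigma_pulled|]. split; [apply increasing_pulled|]. apply image_near_clopen.
Qed.

End Transfer.

Lemma basic_clopen_code x k : basic_clopen (to_nat (code x k, k)) = agree k (bits (code x k)).
Proof. unfold basic_clopen. rewrite cancel_of_to. reflexivity. Qed.

Definition moves_into X (i q : nat) (u : nat -> bool) : Prop :=
  exists h hinv : cantor_subspace X -> cantor_subspace X,
    (forall x, hinv (h x) = x) /\ continuous h /\ continuous hinv /\
    forall y, basic_clopen i (proj1_sig y) -> agree q u (proj1_sig (h y)).

Lemma homogeneous_moves_into X q u :
  homogeneous (cantor_subspace X) -> (exists p, X p /\ agree q u p) ->
  forall x : cantor_subspace X, exists i, basic_clopen i (proj1_sig x) /\ moves_into X i q u.
Proof.
  intros Hom [p [Xp Hp]] x. destruct (Hom x (exist _ p Xp)) as [h [[hinv [H1 [H2 [H3 H4]]]] Hx]].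
  destruct (H3 x ((/2)^q) (half_pow_pos q)) as [d [Hd Hc]].
  destruct (agree_cantor_dist_small (proj1_sig x) d Hd) as [k Hk].
  exists (to_nat (code (proj1_sig x) k, k)). rewrite basic_clopen_code.
  split; [apply agree_sym, agree_bits_code|].
  exists h, hinv. split; auto. split; auto. split; auto.
  intros y Hy. rewrite basic_clopen_code in Hy. assert (A : agree k (proj1_sig x) (proj1_sig y)).
  { eapply agree_trans; [apply agree_bits_code | exact Hy]. }
  apply Hk, Hc in A. rewrite Hx in A. simpl in A. apply cantor_dist_lt_agree in A.
  eapply agree_trans; [exact Hp|]. eapply agree_le; [|exact A]. lia.
Qed.

Lemma local_piece_at X (x0 : cantor_subspace X) m Astar q u (Z : space)
  (e : cantor_subspace X -> Z) i :
  (forall k, cFsigma (Astar k)) -> increasing Astar ->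
  (forall w, adherent X w -> agree q u w -> (X w <-> Dfin m Astar w)) ->
  is_metric Z -> embedding e ->
  exists O H A, local_piece Z m (fun z => exists x, e x = z) O H A /\
    forall z, (moves_into X i q u /\ exists x, basic_clopen i (proj1_sig x) /\ e x = z) -> O z.
Proof.
  intros HA HAinc Hloc HZ He. destruct (classic (moves_into X i q u)) as [Hmv|Hmv].
  - destruct Hmv as [h [hinv [H1 [H2 [H3 H4]]]]].
    destruct (choice (fun k (F : nat -> (nat -> bool) -> Prop) =>
      (forall r, cclosed (F r)) /\ forall w, Astar k w <-> exists r, F r w) HA) as [Fs HFs].
    eexists _, _, _. split.
    + exact (local_piece_near_clopen X x0 m Astar Fs (fun k => proj1 (HFs k))
        (fun k => proj2 (HFs k)) HAinc q u Hloc Z HZ e He h hinv H1 H2 H3 i H4).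
    + intros z [_ [x [Cx <-]]]. apply near_clopen_image; auto.
  - exists (fun _ => False), (fun _ => False), (fun _ _ => False). split.
    + split; [intros z []|]. split; [apply Fsigma0|]. split; [intros; apply Fsigma0|].
      split; [intros a b z _ []|]. intros z; tauto.
    + intros z [Hmv' _]; contradiction.
Qed.

Lemma abs_D_fin_empty X : (forall x, ~ X x) -> abs_D_fin (cantor_subspace X) 0.
Proof.
  intros Hne Z _ e _. exists (fun _ _ => False). split; [intros; lia|]. split; [intros; lia|].
  intros z; split; [intros [[x hx] _]; exfalso; eapply Hne; eauto | intros [k [Hk _]]; lia].
Qed.

Theorem lemma7p4 (X : (nat -> bool) -> Prop) :
  homogeneous (cantor_subspace X) ->
  in_Delta (cantor_subspace X) ->
  exists ell : nat, abs_D_fin (cantor_subspace X) ell.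
Proof.
  intros Hom HD. destruct (classic (exists x, X x)) as [Hne|Hempty].
  2: { exists O. apply abs_D_fin_empty. intros x Xx. apply Hempty; eauto. }
  destruct (Delta_local_Dfin X Hne HD) as [m [Astar [q [u [Hm [HA [Hinc [Hp Hloc]]]]]]]].
  destruct Hne as [x0 Xx0].
  exists (m + 2)%nat. intros Z [HZ _] e He.
  apply (D_fin_class_glue Z HZ _ m (fun i z => moves_into X i q u /\
    exists x, basic_clopen i (proj1_sig x) /\ e x = z)); auto.
  - intros z [x <-]. destruct (homogeneous_moves_into X q u Hom Hp x) as [i [Ci Hi]].
    exists i. eauto.
  - intros i. apply (local_piece_at X (exist _ x0 Xx0) m Astar); auto.
Qed.
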